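(* Let $K$ be a finite ordered simplicial complex. Then there exists $C\in\mathbb{N}$ such that every crystalline subdivision $K_\ell$, $\ell\in\mathbb{N}$, of $K$ admits a coloring of size $C$.
   Context: A simplicial complex is a locally finite set of linear simplices in $\mathbb{R}^N$ closed under faces with pairwise intersections common faces; ordered means vertices totally ordered. $K_\ell$ is the $\ell$th crystalline subdivision: for an ordered $m$-simplex $\langle v_0,\dots,v_m\rangle$, $m>0$, let $\iota$ be the affine map into $[0,1]^m$ with $\iota(v_j)=(0,\dots,0,1,\dots,1)$ ($j$ zeros followed by $m-j$ ones); subdivide $[0,1]^m$ into $2^{\ell m}$ cubes of side $2^{-\ell}$, each into the $m!$ rescaled translates of $\{0\le x_{\pi(1)}\le\dots\le x_{\pi(m)}\le1\}$, and pull back via $\iota$; apply to all simplices of $K$. Two simplices are adjacent if they share a face; the star of a simplex is the set of simplices adjacent to it together with their faces. A coloring of size $C$ of a complex is a surjective map $c$ from its set of top-dimensional simplices to $\{0,\dots,C\}$ such that $c(\Delta)\neq c(\Delta')$ for distinct top simplices $\Delta,\Delta'$ whose stars intersect. *)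

From HB Require Import structures.
From mathcomp Require Import all_boot all_order all_algebra fingroup perm.
From mathcomp Require Import reals.
Set Implicit Arguments. Unset Strict Implicit. Unset Printing Implicit Defensive.
Import Order.TTheory GRing.Theory Num.Theory.
Local Open Scope ring_scope.

Section Defs.
Variable R : realType.

Definition conv (n : nat) (s : seq 'rV[R]_n) (x : 'rV[R]_n) : Prop :=
  exists lam : 'I_(size s) -> R,
    (forall i, 0 <= lam i) /\ \sum_i lam i = 1 /\ x = \sum_i lam i *: s`_i.

Definition aff_indep (n : nat) (s : seq 'rV[R]_n) : Prop :=
  forall lam : 'I_(size s) -> R,
    \sum_i lam i = 0 -> \sum_i lam i *: s`_i = 0 -> forall i, lam i = 0.

(* A finite ordered simplicial complex in R^N: every simplex is listed by its
   vertices, in increasing order for a strict total order r on the vertex set.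
   Faces of an ordered simplex are its nonempty subsequences. *)
Definition is_vertex (N : nat) (K : seq (seq 'rV[R]_N)) (v : 'rV[R]_N) :=
  exists2 s, s \in K & v \in s.

Definition ordered_simplicial_complex (N : nat) (K : seq (seq 'rV[R]_N))
    (r : rel 'rV[R]_N) : Prop :=
  [/\
      forall s, s \in K -> s != [::] /\ aff_indep s,
      forall s t, s \in K -> subseq t s -> t != [::] -> t \in K,
      forall s t, s \in K -> t \in K ->
        (forall x, ~ (conv s x /\ conv t x)) \/
        exists u, [/\ u \in K, subseq u s, subseq u t &
                       forall x, (conv s x /\ conv t x) <-> conv u x],
      (forall v, is_vertex K v -> ~~ r v v) /\
      (forall u v w, is_vertex K u -> is_vertex K v -> is_vertex K w ->
                     r u v -> r v w -> r u w) /\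
      (forall u v, is_vertex K u -> is_vertex K v -> u != v -> r u v || r v u)
    &
      forall s, s \in K -> sorted r s].

(* iota(v_j) = (0,...,0,1,...,1) in R^m with j zeros *)
Definition iota_pt (m j : nat) : 'rV[R]_m :=
  \row_(k < m) (if (j <= k)%N then 1 else 0).

(* x is the pullback via iota (for the ordered simplex s) of w in R^m,
   m = dim s: x = sum lam_j v_j, w = sum lam_j iota(v_j), sum lam_j = 1 *)
Definition pullback (N : nat) (s : seq 'rV[R]_N) (w : 'rV[R]_((size s).-1))
    (x : 'rV[R]_N) : Prop :=
  exists lam : 'I_(size s) -> R,
    [/\ \sum_i lam i = 1, x = \sum_i lam i *: s`_i &
        w = \sum_i lam i *: iota_pt (size s).-1 i].

(* j-th vertex (j = 0..m) of the simplex
   a/2^l + 2^-l {0 <= x_{pi 0} <= ... <= x_{pi (m-1)} <= 1}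
   of the l-th subdivision of [0,1]^m, a being the corner of a small cube *)
Definition cellv (l m : nat) (a : 'I_m -> 'I_(2 ^ l)) (pi : 'S_m) (j : nat)
    : 'rV[R]_m :=
  \row_(k < m) (((a k)%:R + (if (j <= (pi^-1)%g k)%N then 1 else 0))
                 / (2 ^+ l)).

(* The l-th crystalline subdivision K_l, as the set of its simplices
   (each given by a list of its vertices). *)
Definition crystalline (N : nat) (K : seq (seq 'rV[R]_N)) (l : nat)
    (t : seq 'rV[R]_N) : Prop :=
  exists2 s, s \in K &
  exists (a : 'I_(size s).-1 -> 'I_(2 ^ l)) (pi : 'S_((size s).-1)),
    (forall j : 'I_(size s),
        conv [seq iota_pt (size s).-1 i | i <- iota 0 (size s)]
             (cellv a pi j)) /\
    exists xs : seq 'rV[R]_N,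
      [/\ size xs = size s,
          forall j : 'I_(size s), @pullback N s (cellv a pi j) xs`_j,
          subseq t xs & t != [::]].

Definition face_of (N : nat) (F D : seq 'rV[R]_N) := {subset F <= D}.

Definition top_simplex (N : nat) (P : seq 'rV[R]_N -> Prop) (D : seq 'rV[R]_N) :=
  P D /\ forall E, P E -> (size E <= size D)%N.

Definition adjacent (N : nat) (P : seq 'rV[R]_N -> Prop) (A B : seq 'rV[R]_N) :=
  exists F, [/\ P F, F != [::], face_of F A & face_of F B].

Definition star (N : nat) (P : seq 'rV[R]_N -> Prop) (D F : seq 'rV[R]_N) :=
  P F /\ exists A, [/\ P A, adjacent P A D & face_of F A].

Definition stars_meet (N : nat) (P : seq 'rV[R]_N -> Prop) (D D' : seq 'rV[R]_N) :=
  exists F, star P D F /\ star P D' F.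

Definition coloring (N : nat) (P : seq 'rV[R]_N -> Prop)
    (c : seq 'rV[R]_N -> nat) (C : nat) : Prop :=
  [/\ (* well defined on simplices (independent of vertex listing) *)
      forall D D', top_simplex P D -> top_simplex P D' -> D =i D' -> c D = c D',
      forall D, top_simplex P D -> (c D <= C)%N,
      forall k, (k <= C)%N -> exists D, top_simplex P D /\ c D = k
    & forall D D', top_simplex P D -> top_simplex P D' -> ~ (D =i D') ->
        stars_meet P D D' -> c D <> c D'].

End Defs.

From HB Require Import structures.
From mathcomp Require Import all_boot all_order all_algebra fingroup perm.
From mathcomp Require Import reals boolp.
From mathcomp Require Import zify ring lra.
Set Implicit Arguments. Unset Strict Implicit. Unset Printing Implicit Defensive.
Import Order.TTheory GRing.Theory Num.Theory.
Local Open Scope ring_scope.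

(* Points of |K| have barycentric coordinates [bary K x v] with respect to the
   vertices v of K; by the intersection axiom they do not depend on the simplex
   carrying x.  Two vertices of one simplex of K_l have coordinates within
   2 * 2^-l, so when the stars of two top simplices D, D' of K_l meet, the
   vertices of D and D' are within 8 * 2^-l (a chain through two more simplices).
   A top simplex of K_l is a whole cell of some s in K, and the integers
   2^l * (coordinates of its vertices in the cube [0,1]^dim s) are partial sums of
   2^l times barycentric coordinates.  Hence for D, D' in the same s they differ
   by at most 8 |s|, and coloring a top simplex by s together with these
   integers modulo 8 max|s| + 1 separates simplices with meeting stars, using a
   number of colors independent of l. *)

Lemma sum_cast_ord (V : nmodType) n m (e : n = m) (F : 'I_n -> V) :
  \sum_i F i = \sum_(j < m) F (cast_ord (esym e) j).
Proof. by case: m / e; apply: eq_bigr => i _; rewrite cast_ord_id. Qed.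

Lemma eq_modn_near m n d :
  (m < n + d)%N -> (n < m + d)%N -> m = n %[mod d] -> m = n.
Proof.
wlog le_mn : m n / (m <= n)%N => [W|] ? ? emod.
  by case: (leqP m n) => [|/ltnW] h; [|apply/esym]; apply: W.
have : (d %| n - m)%N by rewrite -eqn_mod_dvd // emod.
case E: (n - m)%N => [|k] dvd; first lia.
by have := dvdn_leq (ltn0Sn k) dvd; lia.
Qed.

Section CubeCoordinates.
Variable R : realType.

(* If [w = \sum_i c_i *: iota_pt i] then [w_t = c_0 + ... + c_t]; past the last
   coordinate this partial sum is the total weight [1]. *)
Definition iota_psum n (w : 'rV[R]_n.-1) (t : nat) : R :=
  if insub t is Some t' then w 0 t' else 1.

Definition iota_bary n (w : 'rV[R]_n.-1) (i : nat) : R :=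
  iota_psum w i - (if i is i'.+1 then iota_psum w i' else 0).

Lemma iota_psum_sum n (c : 'I_n -> R) (w : 'rV[R]_n.-1) :
  \sum_i c i = 1 -> w = \sum_i c i *: iota_pt R n.-1 i ->
  forall t, iota_psum w t = \sum_(i : 'I_n | (i <= t)%N) c i.
Proof.
move=> c1 -> t; rewrite /iota_psum; case: insubP => [t' _ <-|].
  rewrite summxE [RHS]big_mkcond; apply: eq_bigr => i _.
  by rewrite !mxE; case: ifP; rewrite ?mulr1 ?mulr0.
rewrite -c1 => t_ge; apply: eq_bigl => i /=.
by apply/esym; case: i => i /=; lia.
Qed.

Lemma iota_baryE n (c : 'I_n -> R) (w : 'rV[R]_n.-1) :
  \sum_i c i = 1 -> w = \sum_i c i *: iota_pt R n.-1 i ->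
  forall i : 'I_n, c i = iota_bary w i.
Proof.
move=> c1 wE [[|i] lt_in]; rewrite /iota_bary /= !(iota_psum_sum c1 wE).
  rewrite subr0 (big_pred1 (Ordinal lt_in)) // => j /=.
  by rewrite -(inj_eq val_inj) /= leqn0.
rewrite (bigD1 (Ordinal lt_in)) //= (eq_bigl (fun j : 'I_n => (j <= i)%N)) ?addrK //.
by move=> j; rewrite /= -(inj_eq val_inj) /=; case: j => j /= _; apply/idP/idP; lia.
Qed.

Lemma iota_bary_close n (w w' : 'rV[R]_n.-1) e :
  (forall t, `|iota_psum w t - iota_psum w' t| <= e) ->
  forall i, `|iota_bary w i - iota_bary w' i| <= 2 * e.
Proof.
move=> close; have e_ge0 : 0 <= e := le_trans (normr_ge0 _) (close 0%N).
case=> [|i]; rewrite /iota_bary.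
  by rewrite !subr0 (le_trans (close 0%N)) // ler_peMl // ler1n.
rewrite (_ : _ - _ - _ = (iota_psum w i.+1 - iota_psum w' i.+1) -
                          (iota_psum w i - iota_psum w' i)); last by ring.
by rewrite (le_trans (ler_normB _ _)) // mulr2n mulrDl mul1r lerD.
Qed.

Definition cellv_num l m (a : 'I_m -> 'I_(2 ^ l)) (pi : 'S_m) (j : nat) (k : 'I_m)
    : nat :=
  a k + (j <= (pi^-1)%g k).

Lemma cellvE l m (a : 'I_m -> 'I_(2 ^ l)) (pi : 'S_m) j k :
  cellv R a pi j 0 k = (cellv_num a pi j k)%:R / 2 ^+ l.
Proof. by rewrite mxE natrD; case: ifP. Qed.

Lemma cellv_psum_close l n (a : 'I_n.-1 -> 'I_(2 ^ l)) (pi : 'S_n.-1) j j' t :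
  `|iota_psum (cellv R a pi j) t - iota_psum (cellv R a pi j') t| <= (2 ^+ l)^-1.
Proof.
have inv_ge0 : (0 : R) <= (2 ^+ l)^-1 by rewrite invr_ge0 exprn_ge0.
rewrite /iota_psum; case: insubP => [k _ _|_]; last by rewrite subrr normr0.
rewrite !cellvE -mulrBl normrM [`|_^-1|]ger0_norm //; apply: ler_piMl => //.
rewrite /cellv_num !natrD opprD addrACA.
rewrite subrr add0r; do 2 case: (_ <= _)%N;
  by rewrite /= ?subrr ?subr0 ?sub0r ?normrN ?normr0 ?normr1.
Qed.

End CubeCoordinates.

Section AffineCombinations.
Variables (R : realType) (N : nat).
Implicit Types (s u : seq 'rV[R]_N).

Definition weight s (lam : 'I_(size s) -> R) (v : 'rV[R]_N) : R :=
  \sum_(i : 'I_(size s) | s`_i == v) lam i.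

Lemma aff_indep_coef s (lam mu : 'I_(size s) -> R) : aff_indep s ->
  \sum_i lam i = \sum_i mu i -> \sum_i lam i *: s`_i = \sum_i mu i *: s`_i ->
  lam =1 mu.
Proof.
move=> ind esum epts i; apply/eqP; rewrite -subr_eq0; apply/eqP.
apply: (ind (fun i => lam i - mu i)); first by rewrite sumrB esum subrr.
by under eq_bigr do rewrite scalerBl; rewrite sumrB epts subrr.
Qed.

Lemma aff_indep_uniq s : aff_indep s -> uniq s.
Proof.
move=> ind; apply: contraT => /(uniqPn 0) [i [j [lt_ij lt_js eq_ij]]].
pose delta k (k' : 'I_(size s)) : R := if k' == k then 1 else 0.
have delta_sum k : \sum_k' delta k k' = 1 by rewrite -big_mkcond big_pred1_eq.
have delta_pts k : \sum_k' delta k k' *: s`_k' = s`_k.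
  rewrite (bigD1 k) //= /delta eqxx scale1r big1 ?addr0 // => k' /negbTE ->.
  exact: scale0r.
pose i' := Ordinal (ltn_trans lt_ij lt_js); pose j' := Ordinal lt_js.
have := aff_indep_coef (lam := delta i') (mu := delta j') ind.
rewrite !delta_sum !delta_pts eq_ij => /(_ erefl erefl i').
by rewrite /delta eqxx -(inj_eq val_inj) /= ltn_eqF // => /eqP; rewrite oner_eq0.
Qed.

Lemma weight_nth s (lam : 'I_(size s) -> R) (i : 'I_(size s)) :
  uniq s -> weight lam s`_i = lam i.
Proof. by move=> us; apply: big_pred1 => k /=; rewrite nth_uniq. Qed.

Lemma weight_notin s (lam : 'I_(size s) -> R) v : v \notin s -> weight lam v = 0.
Proof.
move=> v_s; apply: big_pred0 => k; apply/negbTE; apply: contra v_s => /eqP <-.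
exact: mem_nth.
Qed.

Lemma sum_match_subset (V : nmodType) s u (F : 'I_(size u) -> 'rV[R]_N -> V) :
  uniq s -> {subset u <= s} ->
  \sum_(i < size s) \sum_(k < size u | u`_k == s`_i) F k s`_i = \sum_k F k u`_k.
Proof.
move=> us sub; under eq_bigr do rewrite big_mkcond /=.
rewrite exchange_big /=; apply: eq_bigr => k _.
have uk_s : u`_k \in s by apply/sub/mem_nth.
set x := u`_k in uk_s *; have lt_idx : (index x s < size s)%N by rewrite index_mem.
rewrite -big_mkcond (big_pred1 (Ordinal lt_idx)) /= ?nth_index // => i /=.
by rewrite -{1}(nth_index 0 uk_s) eq_sym nth_uniq // -(inj_eq val_inj).
Qed.

Lemma weight_subset s u (lam : 'I_(size s) -> R) (nu : 'I_(size u) -> R) v :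
  aff_indep s -> {subset u <= s} -> \sum_i lam i = \sum_k nu k ->
  \sum_i lam i *: s`_i = \sum_k nu k *: u`_k -> weight lam v = weight nu v.
Proof.
move=> ind sub esum epts; have us := aff_indep_uniq ind.
pose lam' (i : 'I_(size s)) := weight nu s`_i.
have lamE : lam =1 lam'.
  apply: aff_indep_coef => //.
    by rewrite esum /lam' /weight (sum_match_subset (fun k _ => nu k)).
  rewrite epts /lam' /weight; under [RHS]eq_bigr do rewrite scaler_suml.
  by rewrite (sum_match_subset (fun k x => nu k *: x)).
rewrite /weight (eq_bigr _ (fun i _ => lamE i)) [RHS]big_mkcond /=.
rewrite -(sum_match_subset (s := s) (fun k x => if x == v then nu k else 0)) //.
rewrite big_mkcond; apply: eq_bigr => i _ /=; rewrite /lam' /weight.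
by case: ifP => // _; rewrite big1.
Qed.

End AffineCombinations.

Section Cells.
Variables (R : realType) (N : nat) (K : seq (seq 'rV[R]_N)) (r : rel 'rV[R]_N).
Hypothesis HK : ordered_simplicial_complex K r.
Implicit Types (s t xs : seq 'rV[R]_N) (x v : 'rV[R]_N).

Lemma complex_aff_indep s : s \in K -> aff_indep s.
Proof. by case: HK => simplices _ _ _ _ /simplices[]. Qed.

Lemma complex_neq0 s : s \in K -> s != [::].
Proof. by case: HK => simplices _ _ _ _ /simplices[]. Qed.

Definition bary_rep x s (lam : 'I_(size s) -> R) :=
  [/\ s \in K, forall i, 0 <= lam i, \sum_i lam i = 1 & x = \sum_i lam i *: s`_i].

Lemma bary_rep_weight x s t (lam : 'I_(size s) -> R) (mu : 'I_(size t) -> R) v :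
  bary_rep x lam -> bary_rep x mu -> weight lam v = weight mu v.
Proof.
case=> s_K lam_ge0 lam1 xE [t_K mu_ge0 mu1 xE'].
have [_ _ meet _ _] := HK.
have conv_s : conv s x by exists lam.
have conv_t : conv t x by exists mu.
case: (meet s t s_K t_K) => [/(_ x) []//|[u [u_K sub_s sub_t convE]]].
have [nu [_ [nu1 xE'']]] := (convE x).1 (conj conv_s conv_t).
rewrite (weight_subset (nu := nu) v (complex_aff_indep s_K) (mem_subseq sub_s))
  ?lam1 ?nu1 -?xE //.
by rewrite (weight_subset (nu := nu) v (complex_aff_indep t_K) (mem_subseq sub_t))
  ?mu1 ?nu1 -?xE'.
Qed.

(* Junk value [0] outside |K|. *)
Definition bary x v : R :=
  if pselect (exists p : {s : seq 'rV[R]_N & 'I_(size s) -> R},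
                bary_rep x (projT2 p)) is left H
  then weight (projT2 (projT1 (cid H))) v else 0.

Lemma bary_repE x s (lam : 'I_(size s) -> R) v :
  bary_rep x lam -> bary x v = weight lam v.
Proof.
move=> rep; rewrite /bary; case: pselect => [H|[]]; last by exists (existT _ s lam).
by case: (cid H) => p /= rep'; apply: bary_rep_weight rep' rep.
Qed.

Definition is_cell l s (a : 'I_(size s).-1 -> 'I_(2 ^ l)) (pi : 'S_((size s).-1)) xs :=
  [/\ s \in K,
      forall j : 'I_(size s),
        conv [seq iota_pt R (size s).-1 i | i <- iota 0 (size s)] (cellv R a pi j),
      size xs = size s &
      forall j : 'I_(size s), pullback (s := s) (cellv R a pi j) xs`_j].

Lemma crystallineP l t : crystalline K l t <->
  exists s a pi xs, [/\ @is_cell l s a pi xs, subseq t xs & t != [::]].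
Proof.
split=> [[s s_K [a [pi [conv_a [xs [? ? ? ?]]]]]] | [s [a [pi [xs [[? ? ? ?] ? ?]]]]]].
  by exists s, a, pi, xs.
by exists s => //; exists a, pi; split => //; exists xs.
Qed.

Lemma conv_iota_bary n (w : 'rV[R]_n.-1) :
  conv [seq iota_pt R n.-1 i | i <- iota 0 n] w -> forall i : 'I_n, 0 <= iota_bary w i.
Proof.
case=> lam [lam_ge0 [lam1 wE]].
have e : size [seq iota_pt R n.-1 i | i <- iota 0 n] = n by rewrite size_map size_iota.
pose mu j := lam (cast_ord (esym e) j).
have mu1 : \sum_j mu j = 1 by rewrite -lam1 (sum_cast_ord e).
have wE' : w = \sum_j mu j *: iota_pt R n.-1 j.
  rewrite wE (sum_cast_ord e); apply: eq_bigr => j _.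
  by rewrite (nth_map 0%N) ?size_iota //= nth_iota.
by move=> i; rewrite -(iota_baryE mu1 wE'); apply: lam_ge0.
Qed.

Lemma pullback_iota_bary s (w : 'rV[R]_(size s).-1) x : pullback (s := s) w x ->
  [/\ \sum_(i < size s) iota_bary w i = 1, x = \sum_(i < size s) iota_bary w i *: s`_i &
      w = \sum_(i < size s) iota_bary w i *: iota_pt R (size s).-1 i].
Proof.
case=> lam [lam1 xE wE]; have lamE := iota_baryE lam1 wE.
by split; [rewrite -lam1 | rewrite xE | rewrite {1}wE];
  apply: eq_bigr => i _; rewrite lamE.
Qed.

Section OneCell.
Variables (l : nat) (s : seq 'rV[R]_N) (a : 'I_(size s).-1 -> 'I_(2 ^ l)).
Variables (pi : 'S_((size s).-1)) (xs : seq 'rV[R]_N).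
Hypothesis cell : is_cell a pi xs.

Lemma cell_vertex_rep (j : 'I_(size s)) :
  bary_rep xs`_j (fun i : 'I_(size s) => iota_bary (cellv R a pi j) i).
Proof.
case: cell => s_K conv_a _ vert.
have [? ? _] := pullback_iota_bary (vert j).
by split=> // i; apply: conv_iota_bary.
Qed.

Lemma bary_cell_vertex (j i : 'I_(size s)) :
  bary xs`_j s`_i = iota_bary (cellv R a pi j) i.
Proof.
rewrite (bary_repE _ (cell_vertex_rep j)) weight_nth //.
by case: cell => s_K _ _ _; apply/aff_indep_uniq/complex_aff_indep.
Qed.

Lemma bary_cell_vertex_notin (j : 'I_(size s)) v : v \notin s -> bary xs`_j v = 0.
Proof. by move=> v_s; rewrite (bary_repE _ (cell_vertex_rep j)) weight_notin. Qed.

Lemma cellv_psum_bary (j : 'I_(size s)) k :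
  iota_psum (cellv R a pi j) k = \sum_(i : 'I_(size s) | (i <= k)%N) bary xs`_j s`_i.
Proof.
case: cell => _ _ _ vert; have [w1 _ wE] := pullback_iota_bary (vert j).
by rewrite (iota_psum_sum w1 wE); apply: eq_bigr => i _; rewrite bary_cell_vertex.
Qed.

End OneCell.

Lemma crystalline_bary_close l t p q v : crystalline K l t -> p \in t -> q \in t ->
  `|bary p v - bary q v| <= 2 / 2 ^+ l.
Proof.
case/crystallineP => s [a [pi [xs [cell sub _]]]] p_t q_t.
have [_ _ size_xs _] := cell.
have vertex y : y \in t -> exists j : 'I_(size s), y = xs`_j.
  move=> /(mem_subseq sub) y_xs; have := y_xs; rewrite -index_mem size_xs => lt_y.
  by exists (Ordinal lt_y); rewrite nth_index.
have [[jp ->] [jq ->]] := (vertex p p_t, vertex q q_t).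
case: (boolP (v \in s)) => [v_s | v_s]; last first.
  by rewrite !(bary_cell_vertex_notin cell) // subrr normr0 divr_ge0 ?exprn_ge0.
rewrite -(nth_index 0 v_s); have := v_s; rewrite -index_mem => lt_v.
rewrite -[index v s]/(val (Ordinal lt_v)) !(bary_cell_vertex cell).
by apply: iota_bary_close => k; apply: cellv_psum_close.
Qed.

Lemma crystalline_neq0 l t : crystalline K l t -> t != [::].
Proof. by case/crystallineP => s [a [pi [xs []]]]. Qed.

(* Four steps of [crystalline_bary_close]: p, z in D; z, y in A; y, z' in A';
   z', q in D'. *)
Lemma stars_meet_bary_close l D D' p q v :
  crystalline K l D -> crystalline K l D' -> stars_meet (crystalline K l) D D' ->
  p \in D -> q \in D' -> `|bary p v - bary q v| <= 8 / 2 ^+ l.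
Proof.
move=> D_cr D'_cr [F [[F_cr [A [A_cr [F1 [_ F1_n0 F1_A F1_D]] F_A]]]
                     [_ [A' [A'_cr [F2 [_ F2_n0 F2_A' F2_D']] F_A']]]]] p_D q_D'.
have elt t : t != [::] -> exists y, y \in t.
  by case: t => [//|y t _]; exists y; rewrite mem_head.
have [y y_F] := elt F (crystalline_neq0 F_cr).
have [[z z_F1] [z' z'_F2]] := (elt F1 F1_n0, elt F2 F2_n0).
have := crystalline_bary_close v D_cr p_D (F1_D z z_F1).
have := crystalline_bary_close v A_cr (F1_A z z_F1) (F_A y y_F).
have := crystalline_bary_close v A'_cr (F_A' y y_F) (F2_A' z' z'_F2).
have := crystalline_bary_close v D'_cr (F2_D' z' z'_F2) q_D'.
have := ler_distD (bary z v) (bary p v) (bary q v).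
have := ler_distD (bary y v) (bary z v) (bary q v).
have := ler_distD (bary z' v) (bary y v) (bary q v).
have -> : 8 / 2 ^+ l = 4 * (2 / 2 ^+ l) :> R by rewrite mulrA -natrM.
set e := 2 / 2 ^+ l; lra.
Qed.

Lemma cell_vertices_eq l s (a a' : 'I_(size s).-1 -> 'I_(2 ^ l)) pi pi' xs xs' :
  is_cell a pi xs -> is_cell a' pi' xs' ->
  (forall j : 'I_(size s), cellv R a pi j = cellv R a' pi' j) -> xs = xs'.
Proof.
case=> _ _ size_xs vert [_ _ size_xs' vert'] ecell.
apply: (@eq_from_nth _ 0) => [|j]; first by rewrite size_xs size_xs'.
rewrite size_xs => lt_js.
have [_ -> _] := pullback_iota_bary (vert (Ordinal lt_js)).
have [_ -> _] := pullback_iota_bary (vert' (Ordinal lt_js)).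
by rewrite ecell.
Qed.

Lemma cell_eq_of_bary_close l s (a a' : 'I_(size s).-1 -> 'I_(2 ^ l)) pi pi' xs xs' d :
  is_cell a pi xs -> is_cell a' pi' xs' -> (8 * size s < d)%N ->
  (forall (j : 'I_(size s)) k, cellv_num a pi j k = cellv_num a' pi' j k %[mod d]) ->
  (forall (j : 'I_(size s)) v, `|bary xs`_j v - bary xs'`_j v| <= 8 / 2 ^+ l) ->
  xs = xs'.
Proof.
move=> cell cell' lt_d emod close.
apply: (cell_vertices_eq cell cell') => j; apply/rowP => k.
rewrite !cellvE; congr (_%:R / _).
have psum_close : `|iota_psum (cellv R a pi j) k - iota_psum (cellv R a' pi' j) k|
                    <= (size s)%:R * (8 / 2 ^+ l).
  rewrite (cellv_psum_bary cell j k) (cellv_psum_bary cell' j k) -sumrB.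
  have sum_le : \sum_(i < size s) 8 / 2 ^+ l = (size s)%:R * (8 / 2 ^+ l) :> R.
    by rewrite sumr_const card_ord [RHS]mulr_natl.
  rewrite -sum_le; apply: le_trans (ler_norm_sum _ _ _) _.
  rewrite [X in X <= _]big_mkcond /=; apply: ler_sum => i _.
  by case: ifP => _; [exact: close | rewrite divr_ge0 ?exprn_ge0].
have zclose : `|(cellv_num a pi j k)%:R - (cellv_num a' pi' j k)%:R|
                <= (size s * 8)%:R :> R.
  move: psum_close; rewrite /iota_psum valK !cellvE -mulrBl normrM.
  rewrite [`|_^-1|]ger0_norm ?invr_ge0 ?exprn_ge0 // mulrA.
  by rewrite ler_pM2r ?invr_gt0 ?exprn_gt0 // natrM.
move: zclose; rewrite ler_norml => /andP[lo hi].
have le_z : (cellv_num a pi j k <= cellv_num a' pi' j k + size s * 8)%N.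
  by rewrite -(ler_nat R) natrD; lra.
have le_z' : (cellv_num a' pi' j k <= cellv_num a pi j k + size s * 8)%N.
  by rewrite -(ler_nat R) natrD; lra.
by apply: eq_modn_near (emod j k); lia.
Qed.

End Cells.

Lemma coloring_of_code (R : realType) (N : nat) (X : finType)
    (P : seq 'rV[R]_N -> Prop) (kappa : seq 'rV[R]_N -> X) :
  (exists D, top_simplex P D) ->
  (forall D D', top_simplex P D -> top_simplex P D' -> D =i D' -> kappa D = kappa D') ->
  (forall D D', top_simplex P D -> top_simplex P D' -> ~ D =i D' ->
     stars_meet P D D' -> kappa D <> kappa D') ->
  exists2 C, (C < #|X|)%N & exists c, coloring P c C.
Proof.
move=> [D0 top0] kappa_eqi kappa_sep.
pose U := [seq x <- enum X | `[< exists D, top_simplex P D /\ kappa D = x >]].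
have kappa_U D : top_simplex P D -> kappa D \in U.
  by move=> topD; rewrite mem_filter mem_enum andbT; apply/asboolP; exists D.
have U_uniq : uniq U by rewrite filter_uniq ?enum_uniq.
have U_gt0 : (0 < size U)%N.
  by rewrite lt0n size_eq0; apply: contraTneq (kappa_U D0 top0) => ->.
exists (size U).-1.
  by rewrite prednK // cardE size_filter count_size.
exists (fun D => index (kappa D) U); split.
- by move=> D D' topD topD' eqDD'; rewrite (kappa_eqi D D').
- by move=> D topD; rewrite -ltnS prednK // index_mem kappa_U.
- move=> k; rewrite -ltnS prednK // => lt_kU.
  have := mem_nth (kappa D0) lt_kU; rewrite mem_filter => /andP[/asboolP[D [topD eD]] _].
  by exists D; split; rewrite // eD index_uniq.
- move=> D D' topD topD' neq meet /(congr1 (nth (kappa D0) U)).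
  by rewrite !nth_index ?kappa_U //; apply: kappa_sep.
Qed.

Section CrystallineColoring.
Variables (R : realType) (N : nat) (K : seq (seq 'rV[R]_N)) (r : rel 'rV[R]_N).
Hypothesis HK : ordered_simplicial_complex K r.
Implicit Types (s t D : seq 'rV[R]_N).

Definition max_size := (\max_(s <- K) size s)%N.

Definition modulus := (8 * max_size).+1.

Lemma size_le_max s : s \in K -> (size s <= max_size)%N.
Proof. by move=> s_K; apply: (leq_bigmax_seq (F := size) s s_K). Qed.

Lemma crystalline_cell l s (a : 'I_(size s).-1 -> 'I_(2 ^ l)) pi xs :
  is_cell K a pi xs -> crystalline K l xs.
Proof.
move=> cell; apply/crystallineP; exists s, a, pi, xs; split => //.
by case: cell => s_K _ size_xs _; rewrite -size_eq0 size_xs size_eq0 (complex_neq0 HK).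
Qed.

Lemma top_cell_vertices l D s (a : 'I_(size s).-1 -> 'I_(2 ^ l)) pi xs :
  top_simplex (crystalline K l) D -> is_cell K a pi xs -> subseq D xs -> D = xs.
Proof.
move=> [_ D_max] cell sub; apply/eqP; rewrite -(size_subseq_leqif sub).2.
by rewrite eqn_leq size_subseq //=; apply/D_max/(crystalline_cell cell).
Qed.

Lemma crystalline_size_le l t : crystalline K l t -> (size t <= max_size)%N.
Proof.
case/crystallineP => s [a [pi [xs [[s_K _ size_xs _] sub _]]]].
by rewrite (leq_trans (size_subseq sub)) // size_xs size_le_max.
Qed.

Lemma crystalline_vertex l : K != [::] -> exists t, crystalline K l t.
Proof.
move=> K_n0; have [s s_K] : exists s, s \in K.
  by case: K K_n0 => // s K' _; exists s; rewrite mem_head.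
have := complex_neq0 HK s_K; case: s s_K => [//|v s] s_K _.
have v_K : [:: v] \in K.
  by case: HK => _ faces _ _ _; apply: (faces _ _ s_K); rewrite //= eqxx sub0seq.
have two_l_gt0 : (0 < 2 ^ l)%N by rewrite expn_gt0.
pose a (_ : 'I_(size [:: v]).-1) := Ordinal two_l_gt0.
exists [:: v]; apply: (@crystalline_cell l [:: v] a 1%g); split => // j.
  exists (fun _ => 1); split => //; split; first by rewrite big_ord1.
  by apply/rowP => -[].
exists (fun _ => 1); split; first by rewrite big_ord1.
  by rewrite big_ord1 scale1r; case: j => -[|].
by apply/rowP => -[].
Qed.

Lemma exists_top_simplex l : K != [::] -> exists D, top_simplex (crystalline K l) D.
Proof.
move=> K_n0; have [t0 t0_cr] := crystalline_vertex l K_n0.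
pose Q n := `[< exists t, crystalline K l t /\ size t = n >].
have Q_t0 : Q (size t0) by apply/asboolP; exists t0.
have Q_le n : Q n -> (n <= max_size)%N.
  by move=> /asboolP[t [t_cr <-]]; apply: crystalline_size_le t_cr.
case: (ex_maxnP (ex_intro Q _ Q_t0) Q_le) => n /asboolP[D [D_cr <-]] D_max.
by exists D; split => // E E_cr; apply: D_max; apply/asboolP; exists E.
Qed.

Record cell_data l := CellData {
  cell_simplex : seq 'rV[R]_N;
  cell_corner : 'I_(size cell_simplex).-1 -> 'I_(2 ^ l);
  cell_perm : 'S_((size cell_simplex).-1);
  cell_vertices : seq 'rV[R]_N }.
Arguments cell_corner {l} c _.

Definition cell_ok l (p : cell_data l) :=
  is_cell K (cell_corner p) (cell_perm p) (cell_vertices p).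

(* The index of the carrier simplex in [K], and the table of the integer vertex
   coordinates [cellv_num j k] modulo [modulus] (entries with [k] out of range
   are [0]). *)
Definition code_type :=
  ('I_(size K).+1 * {ffun 'I_max_size * 'I_max_size -> 'I_modulus})%type.

Definition cell_code l (p : cell_data l) : code_type :=
  (inord (index (cell_simplex p) K),
   [ffun jk : 'I_max_size * 'I_max_size =>
      inord (oapp (fun k => cellv_num (cell_corner p) (cell_perm p) jk.1 k %% modulus)
                  0 (insub (val jk.2)))%N]).

Definition code_of_cells l (Q : cell_data l -> Prop) : code_type :=
  if pselect (exists p, Q p) is left H then cell_code (projT1 (cid H))
  else (ord0, [ffun => ord0]).

(* Chosen among the cells with vertex set [D], so that [top_code] only depends on
   [D] up to [=i]. *)
Definition top_code l D : code_type :=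
  code_of_cells (fun p : cell_data l => cell_ok p /\ cell_vertices p =i D).

Lemma top_code_eq_mem l D D' : D =i D' -> top_code l D = top_code l D'.
Proof.
move=> eD; congr code_of_cells; apply: funext => p; apply: propext.
by split=> -[ok e]; split=> // x; rewrite e eD.
Qed.

Lemma top_code_spec l D : top_simplex (crystalline K l) D ->
  exists p : cell_data l,
    [/\ cell_ok p, cell_vertices p =i D & top_code l D = cell_code p].
Proof.
move=> topD; rewrite /top_code /code_of_cells; case: pselect => [H|[]].
  by case: (cid H) => p [ok e]; exists p.
case/crystallineP: topD.1 => s [a [pi [xs [cell sub _]]]].
by exists (CellData a pi xs); split => //= x; rewrite (top_cell_vertices topD cell sub).
Qed.

Lemma top_code_separates l D D' :
  top_simplex (crystalline K l) D -> top_simplex (crystalline K l) D' ->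
  ~ D =i D' -> stars_meet (crystalline K l) D D' -> top_code l D <> top_code l D'.
Proof.
move=> topD topD' neq meet.
have [[s a pi xs] /= [cell eD ->]] := top_code_spec topD.
have [[s' a' pi' xs'] /= [cell' eD' ->]] := top_code_spec topD'.
move: cell cell'; rewrite /cell_ok /= => cell cell'.
have [[s_K _ size_xs _] [s'_K _ size_xs' _]] := (cell, cell').
case=> /(congr1 val); rewrite /= !inordK ?ltnS ?index_size // => e_idx.
have es : s = s' by rewrite -(nth_index [::] s_K) e_idx nth_index.
subst s' => e_tab; apply: neq => x; rewrite -eD -eD'; congr (x \in _).
apply: (cell_eq_of_bary_close HK cell cell' (d := modulus)).
- by rewrite ltnS leq_mul2l size_le_max ?orbT.
- move=> j k; have le_max := size_le_max s_K.
  have [lt_j lt_k] := (ltn_ord j, ltn_ord k).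
  have lt_j' : (j < max_size)%N by lia.
  have lt_k' : (k < max_size)%N by lia.
  have := congr1 (fun f : {ffun _ -> 'I_modulus} =>
                   val (f (Ordinal lt_j', Ordinal lt_k'))) e_tab.
  by rewrite !ffunE /= valK /= !inordK ?ltn_pmod.
- move=> j v; apply: (stars_meet_bary_close HK v topD.1 topD'.1 meet).
    by rewrite -eD mem_nth ?size_xs.
  by rewrite -eD' mem_nth ?size_xs'.
Qed.

End CrystallineColoring.

Theorem lemma3p3 (R : realType) (N : nat) (K : seq (seq 'rV[R]_N))
    (r : rel 'rV[R]_N) :
  ordered_simplicial_complex K r -> K != [::] ->
  exists C : nat, forall l : nat,
    exists2 C' : nat, (C' <= C)%N &
      exists c : seq 'rV[R]_N -> nat, coloring (crystalline K l) c C'.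
Proof.
move=> HK K_n0; exists #|{: code_type K}| => l.
have [C lt_C col] := coloring_of_code (exists_top_simplex HK l K_n0)
  (fun D D' _ _ => @top_code_eq_mem R N K l D D') (@top_code_separates R N K r HK l).
by exists C => //; apply: ltnW.
Qed.
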